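(* Fix finite $\mathcal{S}$, $\mathcal{A}$, $d_0\in\Delta(\mathcal{S})$, $\gamma\in[0,1)$, a reward $\mathcal{R}:\mathcal{S}\times\mathcal{A}\to[0,1]$, and transition models $\mathcal{T},\mathcal{T}'$ with $\delta=\frac12\max_{s,a}\|\mathcal{T}(\cdot\mid s,a)-\mathcal{T}'(\cdot\mid s,a)\|_1>0$. For any $\varepsilon>0$, if $1/(1-\gamma)<\sqrt{\varepsilon/\delta}$, then $(\mathcal{T},\mathcal{T}')$ is $\varepsilon$-unexploitable relative to every policy set and the task $(\mathcal{S},\mathcal{A},\_,d_0,\mathcal{R},\gamma)$.
   Context: For a transition model $\mathcal{T}$ and policy $\pi$ (stationary, or non-stationary $\pi=(\pi_0,\pi_1,\dots)$), $J_{\mathcal{T}}(\pi)=\mathbb{E}\big[\sum_{t\ge0}\gamma^t\mathcal{R}(s_t,a_t)\big]$ with $s_0\sim d_0$, $a_t\sim\pi_t(\cdot\mid s_t)$, $s_{t+1}\sim\mathcal{T}(\cdot\mid s_t,a_t)$. A task is an MDP without transition model; a policy set is any set of such policies. $(\mathcal{T},\mathcal{T}')$ is $\varepsilon$-exploitable relative to $\Pi$ if there exist $\pi,\pi'\in\Pi$ with $J_{\mathcal{T}}(\pi)-J_{\mathcal{T}}(\pi')>\varepsilon$ and $J_{\mathcal{T}'}(\pi')-J_{\mathcal{T}'}(\pi)>\varepsilon$; otherwise $\varepsilon$-unexploitable. *)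

From HB Require Import structures.
From mathcomp Require Import all_boot all_order all_algebra.
From mathcomp Require Import all_classical all_reals all_analysis.
Set Implicit Arguments. Unset Strict Implicit. Unset Printing Implicit Defensive.
Import Order.TTheory GRing.Theory Num.Theory.
Local Open Scope ring_scope.

Section MDP.
Variables (R : realType) (S A : finType).

Definition is_dist (T : finType) (p : T -> R) : Prop :=
  (forall x, 0 <= p x) /\ \sum_(x : T) p x = 1.

(* transition model: T s a s' = probability of s' given (s,a) *)
Definition trans_model := S -> A -> S -> R.
Definition is_trans (T : trans_model) : Prop :=
  forall s a, is_dist (T s a).

(* (possibly non-stationary) Markov policy pi = (pi_0, pi_1, ...):
   pi t s a = probability of action a at state s at time t *)
Definition policy := nat -> S -> A -> R.
Definition is_policy (pi : policy) : Prop :=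
  forall t s, is_dist (pi t s).

Fixpoint state_dist (d0 : S -> R) (T : trans_model) (pi : policy) (t : nat)
  : S -> R :=
  match t with
  | 0 => d0
  | t'.+1 => fun s' => \sum_(s : S) \sum_(a : A)
              state_dist d0 T pi t' s * pi t' s a * T s a s'
  end.

Definition step_reward (d0 : S -> R) (Rw : S -> A -> R) (T : trans_model)
  (pi : policy) (t : nat) : R :=
  \sum_(s : S) \sum_(a : A) state_dist d0 T pi t s * pi t s a * Rw s a.

Definition J (d0 : S -> R) (Rw : S -> A -> R) (gamma : R) (T : trans_model)
  (pi : policy) : R :=
  limn (fun n : nat => \sum_(0 <= t < n) gamma ^+ t * step_reward d0 Rw T pi t).

Definition tv_max (T T' : trans_model) : R :=
  2^-1 * \big[Num.max/0]_(s : S) \big[Num.max/0]_(a : A)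
           \sum_(s' : S) `|T s a s' - T' s a s'|.

Definition exploitable (d0 : S -> R) (Rw : S -> A -> R) (gamma : R)
  (Pi : set policy) (T T' : trans_model) (eps : R) : Prop :=
  exists pi pi', Pi pi /\ Pi pi' /\
    J d0 Rw gamma T pi - J d0 Rw gamma T pi' > eps /\
    J d0 Rw gamma T' pi' - J d0 Rw gamma T' pi > eps.

Definition unexploitable d0 Rw gamma Pi T T' eps : Prop :=
  ~ exploitable d0 Rw gamma Pi T T' eps.

End MDP.

From HB Require Import structures.
From mathcomp Require Import all_boot all_order all_algebra.
From mathcomp Require Import all_classical all_reals all_analysis.
From mathcomp Require Import ring lra.
Set Implicit Arguments. Unset Strict Implicit. Unset Printing Implicit Defensive.
Import Order.TTheory GRing.Theory Num.Theory.
Local Open Scope ring_scope.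
Local Open Scope classical_set_scope.

(* Simulation lemma: along a fixed policy, the state distributions under T and
   T' drift apart by at most 2 delta in L1 per step, so the expected rewards at
   time t differ by at most t delta, and the discounted returns by at most
   sum_t t gamma^t delta <= delta / (1 - gamma)^2.  If the pair were
   eps-exploitable, adding the two defining inequalities would give
   (J_T pi - J_T' pi) + (J_T' pi' - J_T pi') > 2 eps, whereas each bracket is
   at most delta / (1 - gamma)^2 < eps. *)

Section GeometricSums.
Variable R : realFieldType.

Lemma sum_geom_le (g : R) n : 0 <= g < 1 ->
  \sum_(0 <= t < n) g ^+ t <= (1 - g)^-1.
Proof.
case/andP=> g0 g1.
have sumE : (1 - g) * \sum_(0 <= t < n) g ^+ t = 1 - g ^+ n.
  elim: n => [|n IH]; first by rewrite big_geq // mulr0 expr0 subrr.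
  by rewrite big_nat_recr //= mulrDr IH exprS; ring.
have g1_gt0 : 0 < 1 - g by lra.
rewrite -(ler_pM2l g1_gt0) sumE mulfV ?gt_eqF //.
have := exprn_ge0 n g0; lra.
Qed.

Lemma sum_natr_geom_le (g : R) n : 0 <= g < 1 ->
  \sum_(0 <= t < n) t%:R * g ^+ t <= (1 - g)^-2.
Proof.
case/andP=> g0 g1.
have sumE : (1 - g) ^+ 2 * \sum_(0 <= t < n) t%:R * g ^+ t =
    g - n%:R * g ^+ n + n%:R * g ^+ n.+1 - g ^+ n.+1.
  elim: n => [|n IH].
    by rewrite big_geq // mulr0 !mul0r expr1 subr0 addr0 subrr.
  by rewrite big_nat_recr //= mulrDr IH !exprS -!natr1; ring.
have g1_gt0 : 0 < (1 - g) ^+ 2 by rewrite exprn_gt0 //; lra.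
rewrite -(ler_pM2l g1_gt0) sumE mulfV ?gt_eqF //.
have gn0 := exprn_ge0 n g0.
have : 0 <= g ^+ n * (n%:R * (1 - g) + g).
  by rewrite mulr_ge0 // addr_ge0 // mulr_ge0 //; lra.
rewrite exprS; nra.
Qed.

End GeometricSums.

Section Distributions.
Variables (R : realType) (X : finType).

Lemma dist_sum_mulr (p : X -> R) (c : R) : is_dist p -> \sum_x c * p x = c.
Proof. by case=> _ p1; rewrite -mulr_sumr p1 mulr1. Qed.

(* Centring [f] at 1/2 costs nothing since [p] and [q] have the same mass, and
   then |f - 1/2| <= 1/2. *)
Lemma dist_expect_diff_le (p q f : X -> R) :
  is_dist p -> is_dist q -> (forall x, 0 <= f x <= 1) ->
  `|\sum_x p x * f x - \sum_x q x * f x| <= 2^-1 * \sum_x `|p x - q x|.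
Proof.
move=> [_ p1] [_ q1] f01.
have centreE : \sum_x p x * f x - \sum_x q x * f x =
    \sum_x (p x - q x) * (f x - 2^-1).
  have massE : \sum_x (p x - q x) * 2^-1 = 0.
    by rewrite -mulr_suml sumrB p1 q1 subrr mul0r.
  rewrite -[RHS]addr0 -[X in _ = _ + X]massE -big_split -sumrB /=.
  by apply: eq_bigr => x _; ring.
rewrite centreE mulr_sumr; apply: le_trans (ler_norm_sum _ _ _) _.
apply: ler_sum => x _; rewrite normrM [leRHS]mulrC ler_wpM2l //.
by have /andP[f0 f1] := f01 x; rewrite ler_norml; apply/andP; split; lra.
Qed.

End Distributions.

Section Dynamics.
Variables (R : realType) (S A : finType).
Implicit Types (T : trans_model R S A) (pi : policy R S A) (d : S -> R).

(* [state_dist d0 T pi t.+1] is convertible to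
   [push T (pi t) (state_dist d0 T pi t)]. *)
Definition push T (p : S -> A -> R) d (s' : S) : R :=
  \sum_s \sum_a d s * p s a * T s a s'.

Definition is_decision_rule (p : S -> A -> R) := forall s, is_dist (p s).

Lemma push_dist T p d :
  is_trans T -> is_decision_rule p -> is_dist d -> is_dist (push T p d).
Proof.
move=> hT hp [d_ge0 d1]; split.
  move=> s'; apply: sumr_ge0 => s _; apply: sumr_ge0 => a _.
  by rewrite !mulr_ge0 //; [case: (hp s) | case: (hT s a)].
rewrite exchange_big /= -[RHS]d1; apply: eq_bigr => s _.
rewrite exchange_big /= -[RHS](dist_sum_mulr _ (hp s)); apply: eq_bigr => a _.
by rewrite -[RHS](dist_sum_mulr _ (hT s a)).
Qed.

Lemma state_dist_dist d0 T pi :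
  is_dist d0 -> is_trans T -> is_policy pi ->
  forall t, is_dist (state_dist d0 T pi t).
Proof. by move=> hd hT hpi; elim=> //= t; exact: (push_dist hT (hpi t)). Qed.

Lemma push_subr T p d d' s' :
  push T p d s' - push T p d' s' = push T p (fun s => d s - d' s) s'.
Proof.
rewrite /push -sumrB; apply: eq_bigr => s _.
by rewrite -sumrB; apply: eq_bigr => a _; ring.
Qed.

Lemma push_l1_le T p e : is_trans T -> is_decision_rule p ->
  \sum_s' `|push T p e s'| <= \sum_s `|e s|.
Proof.
move=> hT hp.
apply: (@le_trans _ _ (\sum_s' \sum_s \sum_a `|e s| * p s a * T s a s')).
  apply: ler_sum => s' _; apply: le_trans (ler_norm_sum _ _ _) _.
  apply: ler_sum => s _; apply: le_trans (ler_norm_sum _ _ _) _.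
  apply: ler_sum => a _; have [p0 _] := hp s; have [T0 _] := hT s a.
  by rewrite !normrM (ger0_norm (p0 a)) (ger0_norm (T0 s')).
rewrite exchange_big; apply: ler_sum => s _.
rewrite exchange_big /= -[leRHS](dist_sum_mulr _ (hp s)); apply: ler_sum => a _.
by rewrite -[leRHS](dist_sum_mulr _ (hT s a)).
Qed.

Lemma l1_trans_le_tv_max T T' s a :
  \sum_s' `|T s a s' - T' s a s'| <= 2 * tv_max T T'.
Proof.
rewrite /tv_max mulrA mulfV ?pnatr_eq0 // mul1r.
apply: le_trans (le_bigmax _ _ s).
exact: (le_bigmax _ (fun a => \sum_s' `|T s a s' - T' s a s'|) a).
Qed.

Lemma tv_max_ge0 T T' : 0 <= tv_max T T'.
Proof. by rewrite mulr_ge0 // bigmax_ge_id. Qed.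

Lemma tv_maxC T T' : tv_max T' T = tv_max T T'.
Proof.
congr (_ * _); apply: eq_bigr => s _; apply: eq_bigr => a _.
by apply: eq_bigr => s' _; rewrite distrC.
Qed.

Lemma push_model_l1_le T T' p d : is_decision_rule p -> is_dist d ->
  \sum_s' `|push T p d s' - push T' p d s'| <= 2 * tv_max T T'.
Proof.
move=> hp hd.
apply: (@le_trans _ _
  (\sum_s' \sum_s \sum_a d s * p s a * `|T s a s' - T' s a s'|)).
  apply: ler_sum => s' _; rewrite /push -sumrB.
  apply: le_trans (ler_norm_sum _ _ _) _; apply: ler_sum => s _.
  rewrite -sumrB; apply: le_trans (ler_norm_sum _ _ _) _.
  apply: ler_sum => a _; have [p0 _] := hp s; have [d_ge0 _] := hd.
  by rewrite -mulrBr normrM ger0_norm ?mulr_ge0.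
rewrite exchange_big -[leRHS](dist_sum_mulr _ hd); apply: ler_sum => s _.
rewrite exchange_big -[leRHS](dist_sum_mulr _ (hp s)); apply: ler_sum => a _.
have [p0 _] := hp s; have [d_ge0 _] := hd.
rewrite -mulr_sumr mulrC -mulrA ler_wpM2r ?mulr_ge0 //.
exact: l1_trans_le_tv_max.
Qed.

Lemma state_dist_l1_le d0 T T' pi :
  is_dist d0 -> is_trans T -> is_trans T' -> is_policy pi ->
  forall t, \sum_s `|state_dist d0 T pi t s - state_dist d0 T' pi t s|
            <= t%:R * (2 * tv_max T T').
Proof.
move=> hd hT hT' hpi; elim=> [|t IH].
  by rewrite big1 ?mul0r // => s _; rewrite subrr normr0.
set d := state_dist d0 T pi t; set d' := state_dist d0 T' pi t.
have splitE s' : state_dist d0 T pi t.+1 s' - state_dist d0 T' pi t.+1 s' =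
    push T (pi t) (fun s => d s - d' s) s' +
    (push T (pi t) d' s' - push T' (pi t) d' s').
  by rewrite -(push_subr T (pi t) d d') addrA subrK.
under eq_bigr => s' _ do rewrite splitE.
apply: le_trans (ler_sum _ (fun s' _ => ler_normD _ _)) _.
rewrite big_split -natr1 mulrDl mul1r /=.
apply: lerD; last exact/push_model_l1_le/state_dist_dist.
exact: le_trans (push_l1_le _ hT (hpi t)) IH.
Qed.

End Dynamics.

Section Returns.
Variables (R : realType) (S A : finType).
Variables (d0 : S -> R) (Rw : S -> A -> R) (g : R).
Hypotheses (hd0 : is_dist d0) (hRw : forall s a, 0 <= Rw s a <= 1)
  (hg : 0 <= g < 1).
Implicit Types (T : trans_model R S A) (pi : policy R S A).

Lemma step_rewardE T pi t : step_reward d0 Rw T pi t =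
  \sum_s state_dist d0 T pi t s * \sum_a pi t s a * Rw s a.
Proof.
by apply: eq_bigr => s _; rewrite mulr_sumr; apply: eq_bigr => a _; rewrite mulrA.
Qed.

Lemma policy_reward_bounds pi t s : is_policy pi ->
  0 <= \sum_a pi t s a * Rw s a <= 1.
Proof.
move=> hpi; have [p0 p1] := hpi t s; apply/andP; split.
  by apply: sumr_ge0 => a _; have /andP[r0 _] := hRw s a; rewrite mulr_ge0.
rewrite -p1 ler_sum // => a _; have /andP[_ r1] := hRw s a.
by rewrite ler_piMr.
Qed.

Lemma step_reward_bounds T pi t : is_trans T -> is_policy pi ->
  0 <= step_reward d0 Rw T pi t <= 1.
Proof.
move=> hT hpi; have [dt0 dt1] := state_dist_dist hd0 hT hpi t.
rewrite step_rewardE; apply/andP; split.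
  by apply: sumr_ge0 => s _; have /andP[f0 _] := policy_reward_bounds t s hpi;
    rewrite mulr_ge0.
rewrite -dt1 ler_sum // => s _; have /andP[f0 f1] := policy_reward_bounds t s hpi.
by rewrite ler_piMr.
Qed.

Lemma step_reward_model_diff_le T T' pi t :
  is_trans T -> is_trans T' -> is_policy pi ->
  `|step_reward d0 Rw T pi t - step_reward d0 Rw T' pi t| <= t%:R * tv_max T T'.
Proof.
move=> hT hT' hpi; rewrite !step_rewardE.
apply: le_trans (dist_expect_diff_le _ _ (policy_reward_bounds t ^~ hpi)) _;
  try exact: state_dist_dist.
rewrite -[leRHS](mulKf (_ : 2 != 0) (t%:R * _)) ?pnatr_eq0 // [2 * _]mulrCA.
by rewrite ler_wpM2l ?state_dist_l1_le.
Qed.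

Lemma discounted_return_cvg T pi : is_trans T -> is_policy pi ->
  cvgn (fun n => \sum_(0 <= t < n) g ^+ t * step_reward d0 Rw T pi t).
Proof.
move=> hT hpi; case/andP: (hg) => g0 _.
have rw01 t := step_reward_bounds t hT hpi.
apply/cvg_ex; eexists; apply: nondecreasing_cvgn.
  apply/nondecreasing_seqP => n; rewrite big_nat_recr //= lerDl mulr_ge0 //.
    exact: exprn_ge0.
  by case/andP: (rw01 n).
exists (1 - g)^-1 => _ [n _ <-]; apply: le_trans (sum_geom_le n hg).
apply: ler_sum => t _; have /andP[_ r1] := rw01 t.
by rewrite ler_piMr ?exprn_ge0.
Qed.

Lemma J_model_diff_le T T' pi : is_trans T -> is_trans T' -> is_policy pi ->
  J d0 Rw g T pi - J d0 Rw g T' pi <= tv_max T T' * (1 - g)^-2.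
Proof.
move=> hT hT' hpi; case/andP: (hg) => g0 _.
have cT := discounted_return_cvg hT hpi; have cT' := discounted_return_cvg hT' hpi.
rewrite /J -(limB cT cT'); apply: limr_le; first exact: is_cvgB.
apply: nearW => n /=; rewrite fctE -sumrB.
apply: (@le_trans _ _ (\sum_(0 <= t < n) tv_max T T' * (t%:R * g ^+ t))).
  apply: ler_sum => t _; rewrite -mulrBr mulrC mulrA ler_wpM2r ?exprn_ge0 //.
  rewrite mulrC; exact: le_trans (ler_norm _) (step_reward_model_diff_le t hT hT' hpi).
by rewrite -mulr_sumr ler_wpM2l ?tv_max_ge0 ?sum_natr_geom_le.
Qed.

End Returns.

Lemma mul_sqr_lt_of_lt_sqrt_div (R : rcfType) (x c e : R) :
  0 < c -> 0 <= e -> 0 <= x -> x < Num.sqrt (e / c) -> c * x ^+ 2 < e.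
Proof.
move=> c0 e0 x0 hx; rewrite -ltr_pdivlMl // mulrC.
by rewrite -(sqr_sqrtr (divr_ge0 e0 (ltW c0))) ltrXn2r.
Qed.

Theorem mainTheorem15 (R : realType) (S A : finType)
  (d0 : S -> R) (gamma : R) (Rw : S -> A -> R) (T T' : trans_model R S A)
  (eps : R) :
  is_dist d0 -> 0 <= gamma -> gamma < 1 ->
  (forall s a, 0 <= Rw s a <= 1) ->
  is_trans T -> is_trans T' ->
  0 < tv_max T T' ->
  0 < eps ->
  (1 - gamma)^-1 < Num.sqrt (eps / tv_max T T') ->
  forall Pi : set (policy R S A),
    (forall pi, Pi pi -> is_policy pi) ->
    unexploitable d0 Rw gamma Pi T T' eps.
Proof.
move=> hd g0 g1 hRw hT hT' tv_gt0 eps_gt0 h_sqrt Pi hPi.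
move=> [pi [pi' [Ppi [Ppi' [gapT gapT']]]]].
have hg : 0 <= gamma < 1 by apply/andP.
have simT := J_model_diff_le hd hRw hg hT hT' (hPi _ Ppi).
have simT' := J_model_diff_le hd hRw hg hT' hT (hPi _ Ppi').
rewrite tv_maxC in simT'.
have bound_lt : tv_max T T' * (1 - gamma)^-2 < eps.
  rewrite -exprVn; apply: mul_sqr_lt_of_lt_sqrt_div; rewrite ?ltW //.
  by rewrite invr_gt0 subr_gt0.
move: gapT gapT' simT simT' bound_lt; lra.
Qed.
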